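(* Let $q$ be a prime power and $n \ge 1$. For any function $\varphi : M_n(\mathbb{F}_q) \to \mathbb{R}$ of von Mangoldt type with coefficients $(c_\sigma)_{\sigma \in S_n}$, \[ \sum_{f \in M_n(\mathbb{F}_q)} \varphi(f) = \sum_{\sigma \in S_n} c_\sigma\, q^n. \]
   Context: $M_n(\mathbb{F}_q)$ is the set of monic degree-$n$ polynomials in $\mathbb{F}_q[x]$. For $(z_1,\dots,z_n) \in \overline{\mathbb{F}}_q^{\,n}$ and $\sigma \in S_n$, $\delta_\sigma(z_1,\dots,z_n) = 1$ if $\mathrm{Frob}_q(z_1,\dots,z_n) = \sigma(z_1,\dots,z_n)$ (Frobenius $z \mapsto z^q$ applied coordinatewise equals the permutation $\sigma$ of coordinates) and $0$ otherwise. $\varphi$ is of von Mangoldt type with coefficients $(c_\sigma)$ if $\varphi(f) = \sum_{(z_1,\dots,z_n) \in \overline{\mathbb{F}}_q^{\,n},\, f = \prod_i (x - z_i)} \sum_{\sigma \in S_n} c_\sigma \delta_\sigma(z_1,\dots,z_n)$ for all $f \in M_n(\mathbb{F}_q)$. *)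

From HB Require Import structures.
From mathcomp Require Import all_boot all_order all_algebra all_fingroup all_field.
From mathcomp Require Import classical_sets fsbigop.

Import GRing.Theory.
Local Open Scope ring_scope.
Local Open Scope classical_set_scope.

(* M_n(F): monic polynomials of degree n (size = degree + 1). *)
Definition monic_deg (F : fieldType) (n : nat) : set {poly F} :=
  [set f : {poly F} | f \is monic /\ size f = n.+1].

Definition root_tuples {F L : fieldType} (iota : {rmorphism F -> L}) (n : nat)
  (f : {poly F}) : set (n.-tuple L) :=
  [set z : n.-tuple L | map_poly iota f = \prod_(i < n) ('X - (tnth z i)%:P)].

Definition frob_delta {L : fieldType} (q : nat) {n : nat} (s : 'S_n) (z : n.-tuple L) : bool :=
  [forall i : 'I_n, tnth z i ^+ q == tnth z (s i)].

Definition von_mangoldt_type {F : finFieldType} {L : fieldType}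
  (iota : {rmorphism F -> L}) (n : nat) {R : numDomainType}
  (phi : {poly F} -> R) (c : 'S_n -> R) : Prop :=
  forall f : {poly F}, f \in monic_deg F n ->
    phi f = \sum_(z \in root_tuples iota n f)
              \sum_(s : 'S_n) c s * (frob_delta #|F| s z)%:R.

From HB Require Import structures.
From mathcomp Require Import all_boot all_order all_algebra all_fingroup all_field.
From mathcomp Require Import classical_sets fsbigop cardinality reals.
Import GRing.Theory.

Set Implicit Arguments.
Unset Strict Implicit.
Unset Printing Implicit Defensive.

Local Open Scope ring_scope.

(* Exchanging the sums turns the left-hand side into sum_s c_s N_s, where N_s
   counts the tuples z with z_i^q = z_(s i) for all i.  Each such z is the root
   tuple of exactly one monic f of degree n over F: the coefficients of
   prod_i (X - z_i) are fixed by x |-> x^q, hence lie in the image of F, which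
   is the set of roots of X^q - X.  Such a z is determined by its values at one
   point r of each cycle of s, the only constraint being z_r^(q^l) = z_r for the
   cycle length l; as X^(q^l) - X is separable this leaves q^l choices per
   cycle, so N_s = q^n. *)

Section PcharExp.
Variables (R : comNzRingType) (N : nat).
Hypothesis pcharN : [pchar R].-nat N.

Definition pchar_exp of [pchar R].-nat N : R -> R := fun x => x ^+ N.

Lemma pchar_exp_is_nmod_morphism : nmod_morphism (pchar_exp pcharN).
Proof.
have N_gt0 : (0 < N)%N by case/andP: pcharN.
split=> [|x y]; first by rewrite /pchar_exp expr0n eqn0Ngt N_gt0.
by rewrite /pchar_exp exprDn_pchar.
Qed.

Lemma pchar_exp_is_monoid_morphism : monoid_morphism (pchar_exp pcharN).
Proof. by split=> [|x y]; rewrite /pchar_exp ?expr1n ?exprMn. Qed.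

HB.instance Definition _ := GRing.isNmodMorphism.Build R R (pchar_exp pcharN)
  pchar_exp_is_nmod_morphism.
HB.instance Definition _ := GRing.isMonoidMorphism.Build R R (pchar_exp pcharN)
  pchar_exp_is_monoid_morphism.

End PcharExp.

Lemma natr_pnat_pchar (R : nzRingType) N :
  [pchar R].-nat N -> (1 < N)%N -> N%:R = 0 :> R.
Proof.
move=> pcharN N_gt1; have pcharp : pdiv N \in [pchar R].
  by apply: pnatPpi pcharN _; rewrite pi_pdiv.
by apply/eqP; rewrite -(dvdn_pcharf pcharp) pdiv_dvd.
Qed.

Lemma pnat_card_finField (F : finFieldType) : [pchar F].-nat #|F|.
Proof.
have [p p_pr pcharp] := finPcharP F.
have card_pow : #|F| = (p ^ logn p #|F|)%N := card_pprimeChar pcharp.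
by rewrite card_pow pnatX (pnatE _ p_pr) pcharp.
Qed.

Lemma exprXn_modn (R : pzSemiRingType) (y : R) Q o k :
  y ^+ (Q ^ o) = y -> y ^+ (Q ^ k) = y ^+ (Q ^ (k %% o)).
Proof.
move=> y_fixed; rewrite {1}(divn_eq k o) expnD exprM; congr (_ ^+ _).
elim: (k %/ o)%N => [|c IHc]; first by rewrite mul0n expn0 expr1.
by rewrite mulSn expnD exprM y_fixed IHc.
Qed.

Section XnsubX.
Variables (L : fieldType) (N : nat).
Hypothesis N_gt1 : (1 < N)%N.

Lemma size_XnsubX : size ('X^N - 'X : {poly L}) = N.+1.
Proof. by rewrite size_polyDl ?size_polyXn // size_polyN size_polyX ltnS. Qed.

Lemma monic_XnsubX : ('X^N - 'X : {poly L}) \is monic.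
Proof.
by rewrite monicE lead_coefDl ?lead_coefXn // size_polyN size_polyX size_polyXn ltnS.
Qed.

Lemma separable_XnsubX : N%:R = 0 :> L -> separable_poly ('X^N - 'X : {poly L}).
Proof.
move=> N0; rewrite unlock derivB derivXn derivX.
rewrite -mulr_natr -polyC_natr N0 mulr0 sub0r -[- 1]scaleN1r.
by rewrite coprimepZr ?oppr_eq0 ?oner_eq0 // coprimep1.
Qed.

End XnsubX.

Section XnsubXRoots.
Variables (L : closedFieldType) (N : nat).
Hypothesis N_gt1 : (1 < N)%N.

Definition XnsubX_roots : seq L := sval (closed_field_poly_normal ('X^N - 'X)).

Lemma XnsubX_rootsE : 'X^N - 'X = \prod_(x <- XnsubX_roots) ('X - x%:P).
Proof.
rewrite /XnsubX_roots; case: closed_field_poly_normal => rs /= ->.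
by rewrite (monicP (monic_XnsubX _ N_gt1)) scale1r.
Qed.

Lemma mem_XnsubX_roots x : (x \in XnsubX_roots) = (x ^+ N == x).
Proof. by rewrite -root_prod_XsubC -XnsubX_rootsE rootE !hornerE subr_eq0. Qed.

Lemma size_XnsubX_roots : size XnsubX_roots = N.
Proof. by have := size_XnsubX L N_gt1; rewrite XnsubX_rootsE size_prod_XsubC => -[]. Qed.

Lemma uniq_XnsubX_roots : N%:R = 0 :> L -> uniq XnsubX_roots.
Proof. by move=> N0; rewrite -separable_prod_XsubC -XnsubX_rootsE separable_XnsubX. Qed.

End XnsubXRoots.

Lemma pnat_card_rmorph (F : finFieldType) (L : fieldType) (iota : {rmorphism F -> L}) :
  [pchar L].-nat #|F|.
Proof. by rewrite (eq_pnat _ (fmorph_pchar iota)) pnat_card_finField. Qed.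

Lemma card_expn_gt1 (F : finFieldType) m : (0 < m)%N -> (1 < #|F| ^ m)%N.
Proof. by move=> m_gt0; rewrite -{1}(expn0 #|F|) ltn_exp2l ?finNzRing_gt1. Qed.

Section FrobeniusDescent.
Variables (F : finFieldType) (L : fieldType) (iota : {rmorphism F -> L}).
Local Notation q := #|F|.

Lemma natr_card_expn m : (0 < m)%N -> (q ^ m)%:R = 0 :> L.
Proof.
move=> m_gt0; apply: natr_pnat_pchar (card_expn_gt1 F m_gt0).
by rewrite pnatX (pnat_card_rmorph iota).
Qed.

Lemma rmorph_onto_fixed a : a ^+ q = a -> exists x, a = iota x.
Proof.
move=> a_fixed; suff /existsP[x /eqP ->] : [exists x, a == iota x] by exists x.
apply: contraT => /existsPn a_notin_range.
(* Otherwise a and the q elements iota x would be q + 1 roots of X^q - X. *)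
have roots_all : all (root ('X^q - 'X)) (a :: map iota (enum F)).
  rewrite /= rootE !hornerE a_fixed subrr eqxx /=.
  by apply/allP => _ /mapP[x _ ->]; rewrite rootE !hornerE -rmorphXn expf_card subrr.
have roots_uniq : uniq (a :: map iota (enum F)).
  rewrite /= map_inj_uniq ?enum_uniq ?andbT; last exact: fmorph_inj.
  by apply/mapP => -[x _ /eqP]; rewrite (negbTE (a_notin_range x)).
have := max_poly_roots _ roots_all roots_uniq.
by rewrite -size_poly_eq0 size_XnsubX ?finNzRing_gt1 //= size_map -cardE ltnn; apply.
Qed.

Lemma map_poly_onto_fixed (p : {poly L}) :
  (forall i, p`_i ^+ q = p`_i) -> exists f, map_poly iota f = p.
Proof.
move=> p_fixed.
have preimage i : exists x, p`_i == iota x.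
  by have [x ->] := rmorph_onto_fixed (p_fixed i); exists x.
pose pre i := xchoose (preimage i).
exists (\poly_(i < size p) pre i); apply/polyP => i.
rewrite coef_map coef_poly; case: ltnP => [_|p_small].
  exact/esym/eqP/(xchooseP (preimage i)).
by rewrite nth_default //; exact: rmorph0.
Qed.

End FrobeniusDescent.

Section RootPoly.
Variables (F : finFieldType) (L : fieldType) (iota : {rmorphism F -> L}) (n : nat).
Local Notation q := #|F|.
Implicit Types (s : 'S_n) (z : n.-tuple L).

Definition root_poly z : {poly L} := \prod_(i < n) ('X - (tnth z i)%:P).

Lemma size_root_poly z : size (root_poly z) = n.+1.
Proof.
rewrite /root_poly -(big_tuple _ _ _ xpredT (fun x => 'X - x%:P)).
by rewrite size_prod_XsubC size_tuple.
Qed.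

Lemma iter_frob_delta s z : frob_delta q s z ->
  forall k i, tnth z i ^+ (q ^ k) = tnth z (iter k s i).
Proof.
move/forallP => z_frob k; elim: k => [|k IHk] i; first by rewrite expn0 expr1.
by rewrite expnSr exprM IHk (eqP (z_frob _)).
Qed.

Lemma coef_root_poly_fixed s z : frob_delta q s z ->
  forall i, (root_poly z)`_i ^+ q = (root_poly z)`_i.
Proof.
move=> /forallP z_frob i; pose frob := pchar_exp (pnat_card_rmorph iota).
have frob_root_poly : map_poly frob (root_poly z) = root_poly z.
  rewrite rmorph_prod [RHS](reindex_inj (@perm_inj _ s)) /=.
  by apply: eq_bigr => j _; rewrite map_polyXsubC -(eqP (z_frob j)).
by rewrite -[in RHS]frob_root_poly coef_map.
Qed.

Lemma frob_delta_root_tuples s z : frob_delta q s z ->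
  exists2 f, f \in monic_deg F n & z \in root_tuples iota n f.
Proof.
move=> z_frob; have [f f_z] := map_poly_onto_fixed iota (coef_root_poly_fixed z_frob).
exists f; last by rewrite in_setE.
apply/mem_set; split; last by rewrite -(size_map_poly iota) f_z size_root_poly.
by rewrite -(map_monic iota) f_z monic_prod_XsubC.
Qed.

End RootPoly.

Section PermCycles.
Variables (T : finType) (s : {perm T}).
Local Notation order := (fingraph.order s).

Let s_sym : connect_sym (frel s) := fconnect_sym (@perm_inj _ s).

Lemma fconnect_froot x : fconnect s (froot s x) x.
Proof. by rewrite s_sym; exact: connect_root. Qed.

Lemma froot_froot x : froot s (froot s x) = froot s x.
Proof. exact: root_root. Qed.

Lemma froot_perm x : froot s (s x) = froot s x.
Proof. by apply/esym/(fingraph.rootP s_sym); exact: fconnect1. Qed.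

Lemma iter_perm_modn k x : iter k s x = iter (k %% order x) s x.
Proof.
rewrite {1}(divn_eq k (order x)) addnC iterD; congr iter.
elim: (k %/ order x)%N => [|c IHc] //.
by rewrite mulSn iterD IHc (iter_order (@perm_inj _ s)).
Qed.

Lemma eq_iter_perm_modn k l x : iter k s x = iter l s x -> k = l %[mod order x].
Proof.
have mod_lt m := ltn_pmod m (fingraph.order_gt0 s x).
move=> kl; rewrite -(findex_iter (mod_lt k)) -(findex_iter (mod_lt l)).
by rewrite -!iter_perm_modn kl.
Qed.

Lemma sum_order_froot : (\sum_(x | froot s x == x) order x)%N = #|T|.
Proof.
rewrite -sum1_card [RHS](partition_big (froot s) (fun r => froot s r == r)) /=.
  apply: eq_bigr => r /eqP r_root; rewrite sum1_card /fingraph.order.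
  apply: eq_card => x; change (fconnect s r x = (froot s x == r)).
  by rewrite -(root_connect s_sym) r_root eq_sym.
by move=> x _; rewrite froot_froot.
Qed.

End PermCycles.

Lemma perm_expg_fact n (s : 'S_n) : (s ^+ n`!)%g = 1%g.
Proof.
have := cyclic.expg_cardG (finset.in_setT s).
by rewrite cardsT card_Sn.
Qed.

Section FrobeniusTuples.
Variables (F : finFieldType) (L : closedFieldType) (iota : {rmorphism F -> L}) (n : nat).
Local Notation q := #|F|.

Lemma frob_delta_fixed (s : 'S_n) (z : n.-tuple L) : frob_delta q s z ->
  forall i, tnth z i ^+ (q ^ n`!) = tnth z i.
Proof.
by move=> z_frob i; rewrite (iter_frob_delta z_frob) -permX perm_expg_fact perm1.
Qed.

(* The subfield of L of order q^(n!): it contains every coordinate of a tuple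
   z with Frob(z) = s(z), and, being a finite type, lets us count such tuples. *)
Definition Lfix : Type := seq_sub (XnsubX_roots L (q ^ n`!)).

Lemma mem_Lfix x : (x \in XnsubX_roots L (q ^ n`!)) = (x ^+ (q ^ n`!) == x).
Proof. exact/mem_XnsubX_roots/(card_expn_gt1 F)/fact_gt0. Qed.

Definition Lfix0 : Lfix.
Proof.
by exists 0; rewrite mem_Lfix expr0n expn_eq0 eqn0Ngt (ltnW (finNzRing_gt1 F)).
Defined.

Definition Lfix_frob e (x : Lfix) : Lfix := insubd x (val x ^+ (q ^ e)).

Lemma val_Lfix_frob e x : val (Lfix_frob e x) = val x ^+ (q ^ e).
Proof.
have /eqP x_fixed : val x ^+ (q ^ n`!) == val x by rewrite -mem_Lfix (valP x).
by rewrite insubdK // mem_Lfix exprAC x_fixed.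
Qed.

Lemma card_Lfix_fixed m : (0 < m)%N -> (m %| n`!)%N ->
  #|[pred x : Lfix | val x ^+ (q ^ m) == val x]| = (q ^ m)%N.
Proof.
move=> m_gt0 m_dvd; have Q_gt1 := card_expn_gt1 F m_gt0.
rewrite -[RHS](size_XnsubX_roots L Q_gt1) cardE -(size_map val).
apply/perm_size/uniq_perm; rewrite ?uniq_XnsubX_roots ?(natr_card_expn iota) //.
  by rewrite map_inj_uniq ?enum_uniq //; exact: val_inj.
move=> y; rewrite mem_XnsubX_roots //; apply/mapP/idP => [[x]|y_fixed].
  by rewrite mem_enum inE => x_fixed ->.
have y_Lfix : y \in XnsubX_roots L (q ^ n`!).
  by rewrite mem_Lfix (exprXn_modn _ (eqP y_fixed)) (eqP m_dvd) expn0 expr1.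
by exists (SeqSub y_Lfix); rewrite // mem_enum inE.
Qed.

Definition val_tuple (g : {ffun 'I_n -> Lfix}) : n.-tuple L := [tuple val (g i) | i < n].

Lemma val_tuple_inj : injective val_tuple.
Proof.
move=> g1 g2 g12; apply/ffunP => i; apply: val_inj.
by have := congr1 (fun t => tnth t i) g12; rewrite !tnth_mktuple.
Qed.

Lemma frob_delta_val_tuple s z : frob_delta q s z -> exists g, z = val_tuple g.
Proof.
move=> z_frob; have z_Lfix i : tnth z i \in XnsubX_roots L (q ^ n`!).
  by rewrite mem_Lfix (frob_delta_fixed z_frob).
exists [ffun i => SeqSub (z_Lfix i)].
by apply: eq_from_tnth => i; rewrite tnth_mktuple ffunE.
Qed.

End FrobeniusTuples.

Section FrobeniusSolutions.
Variables (F : finFieldType) (L : closedFieldType) (iota : {rmorphism F -> L}).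
Variables (n : nat) (s : 'S_n).
Local Notation q := #|F|.
Local Notation order := (fingraph.order s).
Local Notation Lfix := (Lfix F L n).
Local Notation Lfix0 := (Lfix0 F L n).
Implicit Types (g w : {ffun 'I_n -> Lfix}).

Definition frob_solution : pred {ffun 'I_n -> Lfix} :=
  [pred g | frob_delta q s (val_tuple g)].

(* A solution is determined by its values at the roots of the cycles of s,
   and such a value is constrained only by x^(q^l) = x, l the cycle length. *)
Definition cycle_root_values (i : 'I_n) : pred Lfix :=
  if froot s i == i then [pred x | val x ^+ (q ^ order i) == val x] else pred1 Lfix0.

Definition restrict_cycle_roots g : {ffun 'I_n -> Lfix} :=
  [ffun i => if froot s i == i then g i else Lfix0].

Definition extend_cycle_roots w : {ffun 'I_n -> Lfix} :=
  [ffun j => Lfix_frob (findex s (froot s j) j) (w (froot s j))].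

Lemma frob_solution_iter g : g \in frob_solution ->
  forall k i, val (g i) ^+ (q ^ k) = val (g (iter k s i)).
Proof. by move=> g_sol k i; have := iter_frob_delta g_sol k i; rewrite !tnth_mktuple. Qed.

Lemma restrict_cycle_roots_family g : g \in frob_solution ->
  restrict_cycle_roots g \in family cycle_root_values.
Proof.
move=> g_sol; apply/familyP => i; rewrite /cycle_root_values ffunE.
case: ifP => _; last exact: eqxx.
by rewrite inE (frob_solution_iter g_sol) (iter_order (@perm_inj _ s)).
Qed.

Lemma extend_restrict_cycle_roots g : g \in frob_solution ->
  extend_cycle_roots (restrict_cycle_roots g) = g.
Proof.
move=> g_sol; apply/ffunP => j; apply: val_inj.
rewrite !ffunE froot_froot eqxx val_Lfix_frob (frob_solution_iter g_sol).
by rewrite iter_findex ?fconnect_froot.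
Qed.

Lemma extend_cycle_roots_solution w : w \in family cycle_root_values ->
  extend_cycle_roots w \in frob_solution.
Proof.
move=> /familyP w_fam; apply/forallP => j; rewrite !tnth_mktuple !ffunE.
rewrite !val_Lfix_frob froot_perm -exprM -expnSr; set r := froot s j.
have w_fixed : val (w r) ^+ (q ^ order r) = val (w r).
  by have := w_fam r; rewrite /cycle_root_values froot_froot eqxx inE => /eqP.
apply/eqP; rewrite [LHS](exprXn_modn _ w_fixed) [RHS](exprXn_modn _ w_fixed).
congr (_ ^+ (q ^ _)); apply: eq_iter_perm_modn.
by rewrite iterS !iter_findex ?fconnect_froot // /r -froot_perm fconnect_froot.
Qed.

Lemma restrict_extend_cycle_roots w : w \in family cycle_root_values ->
  restrict_cycle_roots (extend_cycle_roots w) = w.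
Proof.
move=> /familyP w_fam; apply/ffunP => i; rewrite !ffunE.
have := w_fam i; rewrite /cycle_root_values; case: ifP => [/eqP i_root _|_ /eqP //].
by apply: val_inj; rewrite val_Lfix_frob i_root findex0 expn0 expr1.
Qed.

Lemma card_family_cycle_root_values : #|family cycle_root_values| = (q ^ n)%N.
Proof.
rewrite card_family foldrE big_map big_enum /=.
rewrite -[RHS](congr1 (expn q) (etrans (sum_order_froot s) (card_ord n))).
rewrite expn_sum [RHS]big_mkcond /=.
apply: eq_bigr => i _; rewrite /cycle_root_values; case: ifP => _; last exact: card1.
apply: (card_Lfix_fixed iota); first exact: fingraph.order_gt0.
by apply: dvdn_fact; rewrite fingraph.order_gt0 -[X in (_ <= X)%N]card_ord max_card.
Qed.

Lemma card_frob_solution : #|frob_solution| = (q ^ n)%N.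
Proof.
rewrite -card_family_cycle_root_values -(card_in_imset (f := restrict_cycle_roots)).
  apply: eq_card => w; apply/imsetP/idP => [[g g_sol ->]|w_fam].
    exact: restrict_cycle_roots_family.
  exists (extend_cycle_roots w); first exact: extend_cycle_roots_solution.
  by rewrite restrict_extend_cycle_roots.
move=> g1 g2 g1_sol g2_sol eq_g.
by rewrite -(extend_restrict_cycle_roots g1_sol) eq_g extend_restrict_cycle_roots.
Qed.

End FrobeniusSolutions.

Local Open Scope classical_set_scope.

Lemma finite_monic_deg (F : finFieldType) n : finite_set (monic_deg F n).
Proof.
apply: (@sub_finite_set _ _ ((fun t : n.+1.-tuple F => Poly t) @` setT)).
  by move=> f [_ /eqP size_f]; exists (Tuple size_f); rewrite //= polyseqK.
exact: finite_image finite_finset.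
Qed.

Section RootTupleSums.
Variables (F : finFieldType) (L : closedFieldType) (iota : {rmorphism F -> L}).
Variables (n : nat) (R : nmodType) (G : n.-tuple L -> R).
Local Notation q := #|F|.
Local Notation val_tuple := (@val_tuple F L n).
Hypothesis G_frob : forall z, G z != 0 -> exists s : 'S_n, frob_delta q s z.

Lemma fsbig_val_tuple (B : set (n.-tuple L)) :
  \sum_(z \in B) G z =
  \sum_(g : {ffun 'I_n -> Lfix F L n} | val_tuple g \in B) G (val_tuple g).
Proof.
rewrite -(fsbig_widen (B `&` range val_tuple) B G) //; last first.
  move=> z [Bz z_notin]; apply/eqP; apply: contraT => /G_frob[s].
  by case/frob_delta_val_tuple => g z_g; case: z_notin; split => //; exists g.
have -> : B `&` range val_tuple = val_tuple @` [set g | B (val_tuple g)].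
  apply/seteqP; split => [z [Bz [g _ g_z]]|z [g Bg <-]]; last by split => //; exists g.
  by exists g; rewrite //= g_z.
rewrite fsbig_image; last by move=> g1 g2 _ _; exact: val_tuple_inj.
rewrite [RHS]bigfs ?index_enum_uniq //; last by move=> g _; rewrite mem_index_enum.
by apply: eq_fsbigl; apply/seteqP; split => g /=; rewrite ?in_setE.
Qed.

Lemma fsbig_monic_root_tuples :
  \sum_(f \in monic_deg F n) \sum_(z \in root_tuples iota n f) G z =
  \sum_(g : {ffun 'I_n -> Lfix F L n}) G (val_tuple g).
Proof.
under eq_fsbigr do rewrite fsbig_val_tuple big_mkcond.
rewrite fsbig_finite /=; last exact: finite_monic_deg.
rewrite exchange_big /=; apply: eq_bigr => g _.
have [-> | ] := eqVneq (G (val_tuple g)) 0; first by rewrite big1 // => f _; case: ifP.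
case/G_frob => s /(frob_delta_root_tuples iota)[f0 f0_monic g_f0].
have f0_fset : f0 \in finmap.enum_fset (fset_set (monic_deg F n)).
  by rewrite in_fset_set //; exact: finite_monic_deg.
rewrite (bigD1_seq f0 f0_fset (finmap.fset_uniq _)) /= (ifT _ _ g_f0).
rewrite big1 ?addr0 // => f f_neq; case: ifP => // /set_mem g_f.
suff f_f0 : f = f0 by rewrite f_f0 eqxx in f_neq.
by apply: (map_poly_inj iota); rewrite g_f (set_mem g_f0).
Qed.

End RootTupleSums.

Theorem proposition4p8 (F : finFieldType) (L : closedFieldType)
  (iota : {rmorphism F -> L}) (n : nat) (hn : (1 <= n)%N)
  (R : realType) (phi : {poly F} -> R) (c : 'S_n -> R) :
  von_mangoldt_type iota n phi c ->
  \sum_(f \in monic_deg F n) phi f = \sum_(s : 'S_n) c s * (#|F| ^ n)%:R.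
Proof.
move=> phi_vm; rewrite (eq_fsbigr _ _ phi_vm) fsbig_monic_root_tuples; last first.
  move=> z G_z; apply/existsP; apply: contraNT G_z => /existsPn z_nfrob.
  by rewrite big1 // => s _; rewrite (negPf (z_nfrob s)) mulr0.
rewrite exchange_big /=; apply: eq_bigr => s _.
rewrite -mulr_sumr -natr_sum -(card_frob_solution iota s); congr (_ * _%:R).
rewrite -[#|frob_solution s|]sum1_card [RHS]big_mkcond.
by apply: eq_bigr => g _; rewrite inE; case: frob_delta.
Qed.
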